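(* Let $f\in R$ with $0\le f\le b\cdot1$ and let $0=s_0<s_1<\dots<s_n=b$ be rationals. Then $$\sum_{i=0}^{n-1}s_i\,(s_i<f<s_{i+1})\;\le\; f\;\le\;\sum_{i=0}^{n-1}s_{i+1}\,(s_i\le f\le s_{i+1}),$$ where $(s_i<f<s_{i+1}):=D(f-s_i)\wedge D(s_{i+1}-f)$ and $(s_i\le f\le s_{i+1}):=(f\ge s_i)\wedge(f\le s_{i+1})$.
   Context: $R$ is a Riesz space over $\mathbb{Q}$ with strong unit $1$; rationals $r$ are identified with $r\cdot1$. $\mathrm{Spec}(R)$ is the distributive lattice generated by $D(a)$, $a\in R$, subject to $D(1)=1$; $D(a)\wedge D(-a)=0$; $D(a+b)\le D(a)\vee D(b)$; $D(a)=0$ if $a\le0$; $D(a\vee b)=D(a)\vee D(b)$. $B$ is the Boolean algebra freely generated by $\mathrm{Spec}(R)$; $(f>r):=D(f-r)$, $(f<r):=D(r-f)$, $(f\le r):=\neg(f>r)$, $(f\ge r):=\neg(f<r)$. A positive simple function is a formal finite sum $\sum_i r_ix_i$ with rationals $r_i\ge0$, $x_i\in B$; for a finite index set $I$, $x_I:=\bigwedge_{i\in I}x_i$ ($x_\emptyset=1$), $r_I:=\sum_{i\in I}r_i$ ($r_\emptyset=0$). For $f\in R$: $\sum_ir_ix_i\le f$ iff $x_I\le(f\ge r_I)$ for every finite index set $I$; $f\le\sum_js_jy_j$ iff $1=\bigvee_J((f\le s_J)\wedge y_J)$, the join over all finite index sets $J$. *)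

From HB Require Import structures.
From mathcomp Require Import all_boot all_order all_algebra.
Set Implicit Arguments. Unset Strict Implicit. Unset Printing Implicit Defensive.
Import Order.TTheory GRing.Theory Num.Theory.

Local Open Scope ring_scope.

(* A Riesz space over Q with strong unit [one]: a Q-vector space [V] with a
   partial order [le] compatible with the vector-space operations, which is a
   lattice (we only need the join [join], given as least upper bound). *)
Definition is_riesz_unit (V : lmodType rat) (le : rel V) (join : V -> V -> V)
    (one : V) : Prop :=
  (forall x, le x x) /\
  (forall x y, le x y -> le y x -> x = y) /\
  (forall x y z, le x y -> le y z -> le x z) /\
  (forall x y z, le x y -> le (x + z) (y + z)) /\
  (forall (q : rat) x y, 0 <= q -> le x y -> le (q *: x) (q *: y)) /\
  (forall x y, le x (join x y) /\ le y (join x y)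
               /\ forall z, le x z -> le y z -> le (join x y) z) /\
  le 0 one /\
  (forall a, exists n : nat, le a (n%:R *: one) /\ le (- (n%:R *: one)) a).

(* [D : V -> B] satisfies the defining relations of Spec(R), with B a Boolean
   algebra (complemented distributive lattice with top and bottom). *)
Definition is_spec_map (V : lmodType rat) (le : rel V) (join : V -> V -> V)
    (one : V) (d : Order.disp_t) (B : ctbDistrLatticeType d) (D : V -> B) : Prop :=
  [/\ D one = \top%O,
      (forall a, (D a `&` D (- a))%O = \bot%O),
      (forall a b, (D (a + b) <= D a `|` D b)%O),
      (forall a, le a 0 -> D a = \bot%O)
    & (forall a b, D (join a b) = (D a `|` D b)%O)].

Section SimpleFunctions.
Variables (V : lmodType rat) (one : V) (d : Order.disp_t)
          (B : ctbDistrLatticeType d) (D : V -> B).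

(* rationals r are identified with r *: one *)
Definition gtB (f : V) (r : rat) : B := D (f - r *: one).
Definition ltB (f : V) (r : rat) : B := D (r *: one - f).
Definition leB (f : V) (r : rat) : B := (~` gtB f r)%O.
Definition geB (f : V) (r : rat) : B := (~` ltB f r)%O.

(* A simple function \sum_i r_i x_i is a finite list of pairs (r_i, x_i);
   index sets are subsets of 'I_(size s). *)
Definition sf_coef (s : seq (rat * B)) (I : {set 'I_(size s)}) : rat :=
  \sum_(i in I) (nth (0, \top%O) s i).1.
Definition sf_meet (s : seq (rat * B)) (I : {set 'I_(size s)}) : B :=
  (\meet_(i in I) (nth (0, \top%O) s i).2)%O.

Definition sf_le (s : seq (rat * B)) (f : V) : Prop :=
  forall I : {set 'I_(size s)}, (sf_meet I <= geB f (sf_coef I))%O.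

Definition le_sf (f : V) (t : seq (rat * B)) : Prop :=
  \top%O = (\join_(J : {set 'I_(size t)}) (leB f (sf_coef J) `&` sf_meet J))%O.

End SimpleFunctions.

From HB Require Import structures.
From mathcomp Require Import all_boot all_order all_algebra.
Import Order.TTheory GRing.Theory Num.Theory.
Import Order.Theory.
Local Open Scope ring_scope.

(* Only the following parts of the Riesz and Spec(R) axioms matter: order
   translation/scaling, 0 <= 1, D(a) /\ D(-a) = 0, D(a+b) <= D(a) \/ D(b) and
   D(a) = 0 for a <= 0.  From them we derive the threshold calculus
   (f > r) <= (f >= r), monotonicity of (f > r) in r, (f < r) /\ (f > r') = 0
   for r <= r', and (f >= 0) = 1, (f > b) = 0 under the bounds on f.

   Two general criteria for simple functions then reduce the theorem to this
   calculus:
   - a simple function whose pieces are pairwise disjoint and each lie below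
     their own threshold (f >= r_i) is below f (only singletons and the empty
     index set survive in the definition of <=);
   - f is below a simple function as soon as the empty index set together with
     the singleton terms cover 1.
   The open intervals (s_i < f < s_(i+1)) are pairwise disjoint, and the closed
   ones cover 1 by a telescoping argument: 1 <= (f <= s_0) \/ (f > s_0) and
   (f > s_k) <= (s_k <= f <= s_(k+1)) \/ (f > s_(k+1)), ending at (f > b) = 0. *)

Lemma increasing_le {s : nat -> rat} {n : nat} :
  (forall i, (i < n)%N -> s i < s i.+1) ->
  forall i j, (i <= j <= n)%N -> s i <= s j.
Proof.
move=> hinc i j /andP [hij]; rewrite -(subnKC hij).
elim: (j - i)%N => [|k IH] hk; first by rewrite addn0.
by rewrite addnS in hk *; apply: le_trans (IH (ltnW hk)) (ltW (hinc _ hk)).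
Qed.

Lemma nth_map_iota (T : Type) (x0 : T) (g : nat -> T) (n i : nat) :
  (i < n)%N -> nth x0 [seq g j | j <- iota 0 n] i = g i.
Proof. by move=> hi; rewrite (nth_map 0%N) ?size_iota // nth_iota. Qed.

Section ThresholdCalculus.
Context {V : lmodType rat} {le : rel V} {join : V -> V -> V} {one : V}.
Hypothesis hR : is_riesz_unit le join one.
Context {d : Order.disp_t} {B : ctbDistrLatticeType d} {D : V -> B}.
Hypothesis hD : is_spec_map le join one D.

Local Notation gtB := (gtB one D).
Local Notation ltB := (ltB one D).
Local Notation geB := (geB one D).
Local Notation leB := (leB one D).

Lemma le_addr {x y : V} (z : V) : le x y -> le (x + z) (y + z).
Proof. by case: hR => _ [_ [_ [addc _]]]; apply: addc. Qed.

Lemma le_sub0 {a c : V} : le a c -> le (a - c) 0.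
Proof. by move=> hac; rewrite -(subrr c); apply: le_addr. Qed.

Lemma le_scale_one (q r : rat) : q <= r -> le (q *: one) (r *: one).
Proof.
case: hR => _ [_ [_ [_ [scal [_ [pos1 _]]]]]] hqr.
have := scal (r - q) 0 one; rewrite subr_ge0 hqr scaler0 => /(_ isT pos1).
by move/(le_addr (q *: one)); rewrite add0r scalerBl subrK.
Qed.

Lemma D_le0 {a : V} : le a 0 -> D a = \bot%O.
Proof. by case: hD => _ _ _ Dle0 _; apply: Dle0. Qed.

Lemma D_disjN (a : V) : (D a `&` D (- a))%O = \bot%O.
Proof. by case: hD. Qed.

(* D is monotone: from D(c + (a - c)) <= D(c) \/ D(a - c) with a - c <= 0. *)
Lemma D_mono (a c : V) : le a c -> (D a <= D c)%O.
Proof.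
case: hD => _ _ Dadd _ _ hac.
by have := Dadd c (a - c); rewrite addrC subrK (D_le0 (le_sub0 hac)) joinx0.
Qed.

Lemma gt_le_ge (f : V) (r : rat) : (gtB f r <= geB f r)%O.
Proof. by rewrite /geB -disj_leC /gtB /ltB -[r *: one - f]opprB D_disjN. Qed.

Lemma gt_antitone (f : V) (r r' : rat) : r <= r' -> (gtB f r' <= gtB f r)%O.
Proof.
move=> hrr'; apply: D_mono; rewrite ![f - _]addrC; apply: le_addr.
by rewrite -!scaleNr; apply: le_scale_one; rewrite lerN2.
Qed.

Lemma lt_gt_disj (f : V) (r r' : rat) :
  r <= r' -> (ltB f r `&` gtB f r' = \bot)%O.
Proof.
move=> hrr'; apply/eqP; rewrite -lex0 -(D_disjN (r *: one - f)) opprB.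
by apply: leI2; [exact: lexx | exact: gt_antitone].
Qed.

Lemma le_gt_top (f : V) (r : rat) : (leB f r `|` gtB f r = \top)%O.
Proof. exact: joinCx. Qed.

Lemma ge_split (f : V) (r r' : rat) :
  (geB f r <= (geB f r `&` leB f r') `|` gtB f r')%O.
Proof. by rewrite joinIl -/(leB f r') le_gt_top meetx1 leUl. Qed.

Lemma ge0_top (f : V) : le 0 f -> geB f 0 = \top%O.
Proof.
move=> hf0; rewrite /geB /ltB scale0r sub0r D_le0 ?compl0 //.
by have := le_addr (- f) hf0; rewrite add0r subrr.
Qed.

Lemma gt_bound_bot (f : V) (b : rat) : le f (b *: one) -> gtB f b = \bot%O.
Proof. by move=> hfb; apply: D_le0; apply: le_sub0. Qed.

Local Notation nth0 t i := (nth (0, \top%O) t i).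

Lemma sf_le_disjoint (f : V) (t : seq (rat * B)) :
  geB f 0 = \top%O ->
  (forall i : 'I_(size t), ((nth0 t i).2 <= geB f (nth0 t i).1)%O) ->
  (forall i j : 'I_(size t), i != j -> ((nth0 t i).2 `&` (nth0 t j).2 = \bot)%O) ->
  sf_le one D t f.
Proof.
move=> hge0 hpiece hdisj I; rewrite /sf_meet /sf_coef.
have [->|[i Hi]] := set_0Vmem I; first by rewrite !big_set0 hge0 lex1.
have [/existsP [j /andP [Hj Hji]]|Hsingle] := boolP [exists j, (j \in I) && (j != i)].
  apply: le_trans (le0x _); rewrite -(hdisj j i Hji) lexI.
  by rewrite (meets_inf _ Hj) (meets_inf _ Hi).
have -> : I = [set i].
  apply/setP => j; rewrite in_set1; apply/idP/eqP => [Hj|->//].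
  by apply/eqP; apply: contraNT Hsingle => Hji; apply/existsP; exists j; rewrite Hj.
by rewrite !big_set1.
Qed.

Lemma le_sf_cover (f : V) (t : seq (rat * B)) :
  (\top <= leB f 0 `|` \join_(j : 'I_(size t)) (leB f (nth0 t j).1 `&` (nth0 t j).2))%O ->
  le_sf one D f t.
Proof.
move=> hcov; apply/esym/eqP; rewrite -le1x; apply: le_trans hcov _.
have hsup (J : {set 'I_(size t)}) :
    (leB f (sf_coef J) `&` sf_meet J
     <= \join_(K : {set 'I_(size t)}) (leB f (sf_coef K) `&` sf_meet K))%O.
  exact: (joins_sup (P := xpredT)).
rewrite leUx; apply/andP; split.
  by have := hsup set0; rewrite /sf_coef /sf_meet !big_set0 meetx1.
by apply/joinsP => j _; have := hsup [set j]; rewrite /sf_coef /sf_meet !big_set1.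
Qed.

Lemma interval_cover (f : V) (s : nat -> rat) (n : nat) (y : B) :
  (leB f (s 0%N) <= y)%O ->
  (forall k, (k < n)%N -> (geB f (s k) `&` leB f (s k.+1) <= y)%O) ->
  forall k, (k <= n)%N -> (\top <= y `|` gtB f (s k))%O.
Proof.
move=> hy0 hystep; elim=> [|k IH] hk.
  by rewrite -(le_gt_top f (s 0%N)) leU2.
apply: le_trans (IH (ltnW hk)) _; rewrite leUx leUl /=.
apply: le_trans (gt_le_ge f (s k)) _; apply: le_trans (ge_split f (s k) (s k.+1)) _.
exact: leU2 (hystep k hk) (lexx _).
Qed.

(* The open intervals (s_i < f < s_(i+1)) of a strictly increasing sequence
   are pairwise disjoint: interval i lies below s_(i+1) <= s_j, interval j above. *)
Lemma open_intervals_disj (f : V) (s : nat -> rat) (n : nat) :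
  (forall i, (i < n)%N -> s i < s i.+1) ->
  forall i j, (i < j < n)%N ->
  ((gtB f (s i) `&` ltB f (s i.+1)) `&` (gtB f (s j) `&` ltB f (s j.+1)) = \bot)%O.
Proof.
move=> hinc i j /andP [hij hjn]; apply/eqP; rewrite -lex0.
rewrite -(lt_gt_disj f _ _ (increasing_le hinc i.+1 j _)); last by rewrite hij ltnW.
by apply: leI2; [exact: leIr | exact: leIl].
Qed.

End ThresholdCalculus.

Theorem lemma4p8 (V : lmodType rat) (le : rel V) (join : V -> V -> V) (one : V)
    (hR : is_riesz_unit le join one)
    (d : Order.disp_t) (B : ctbDistrLatticeType d) (D : V -> B)
    (hD : is_spec_map le join one D)
    (f : V) (b : rat) (n : nat) (s : nat -> rat)
    (hf0 : le 0 f) (hfb : le f (b *: one))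
    (hs0 : s 0%N = 0) (hsn : s n = b)
    (hinc : forall i, (i < n)%N -> s i < s i.+1) :
  sf_le one D
    [seq (s i, (D (f - s i *: one) `&` D (s i.+1 *: one - f))%O) | i <- iota 0 n] f
  /\
  le_sf one D f
    [seq (s i.+1, (geB one D f (s i) `&` leB one D f (s i.+1))%O) | i <- iota 0 n].
Proof.
split.
- set lower := [seq _ | i <- iota 0 n].
  have hsz (k : 'I_(size lower)) : (k < n)%N.
    by apply: leq_trans (ltn_ord k) _; rewrite size_map size_iota.
  have hdisj := open_intervals_disj hR hD f s n hinc.
  apply: sf_le_disjoint; first exact: (ge0_top hR hD f hf0).
    move=> i; rewrite nth_map_iota //=.
    exact: leIxl (gt_le_ge hD f (s i)).
  move=> i j; rewrite -(inj_eq val_inj) !nth_map_iota //=.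
  case: ltngtP => // hij _; first by rewrite hdisj ?hij ?hsz.
  by rewrite meetC hdisj ?hij ?hsz.
- set upper := [seq _ | i <- iota 0 n]; apply: le_sf_cover.
  set cover := (_ `|` _)%O.
  have hupper k (hk : (k < n)%N) :
      (geB one D f (s k) `&` leB one D f (s k.+1) <= cover)%O.
    have hkt : (k < size upper)%N by rewrite size_map size_iota.
    apply: le_trans (leUr _ _).
    apply: le_trans (joins_sup (P := xpredT) _ (j := Ordinal hkt) isT).
    by rewrite /= nth_map_iota //= lexI leIr lexx.
  have := interval_cover hD f s n cover _ hupper n (leqnn n).
  rewrite hsn (gt_bound_bot hR hD f b hfb) joinx0; apply.
  by rewrite hs0; exact: leUl.
Qed.
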